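(* Let $v\in\mathbb{M}\setminus\partial\mathbb{M}$ and $0<\epsilon<\infty$. Then there exists $w\in\partial\mathbb{M}$ with $d_{\mathrm{int}}(v,w)<\epsilon$ if and only if $\mathcal{T}_{2\epsilon}v\not\preceq Tv$.
   Context: Fix $\Lambda>0$ and an increasing homeomorphism $\varphi\colon[-\infty,\infty]\to[-\Lambda,\Lambda]$; for $s\in\mathbb{R}$ let $\rho_s\colon[-\Lambda,\Lambda]\to[-\Lambda,\Lambda]$, $\rho_s(t)=\varphi(s+\varphi^{-1}(t))$. Let $\mathbb{M}=\{(x,y)\in\mathbb{R}^2: -2\Lambda\le x+y\le2\Lambda\}$ with partial order $(x,y)\preceq(x',y')$ iff $x\ge x'$ and $y\le y'$, and boundary $\partial\mathbb{M}=\{|x+y|=2\Lambda\}$. Let $T\colon\mathbb{M}\to\mathbb{M}$, $T(x,y)=(-2\Lambda-y,2\Lambda-x)$. Put $S=(-\Lambda,\Lambda]\times[-\Lambda,\Lambda)$, $L=\{(x,y):x+y\ge-2\Lambda,\ x\le-\Lambda,\ y<\Lambda\}$, $A=\{(x,y):x+y\le2\Lambda,\ x>-\Lambda,\ y\ge\Lambda\}$; $\mathbb{M}$ is the disjoint union of the sets $T^k(S\sqcup L\sqcup A)$, $k\in\mathbb{Z}$. For $\epsilon\ge0$, $k\in\mathbb{Z}$, define $\mathcal{T}_\epsilon\colon\mathbb{M}\to\mathbb{M}$ by $\mathcal{T}_\epsilon(T^k(x,y))=T^k(\rho_{-\epsilon}(x),\rho_\epsilon(y))$ if $(x,y)\in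 S$; $=T^k(-2\Lambda-\rho_\epsilon(-2\Lambda-x),\rho_\epsilon(y))$ if $(x,y)\in L$; $=T^k(\rho_{-\epsilon}(x),2\Lambda-\rho_{-\epsilon}(2\Lambda-y))$ if $(x,y)\in A$. Let $d_{\mathrm{int}}(v,w)=\inf\{\epsilon>0: v\preceq\mathcal{T}_\epsilon w\text{ and }w\preceq\mathcal{T}_\epsilon v\}$ (infimum of empty set $=\infty$). *)

From Stdlib Require Import Reals Lra ZArith ClassicalEpsilon.
From Coquelicot Require Import Coquelicot.
Open Scope R_scope.

Definition pt := (R * R)%type.

Definition incr_homeo (Lam : R) (phi : Rbar -> R) (psi : R -> Rbar) : Prop :=
  (forall a b : Rbar, Rbar_lt a b -> phi a < phi b) /\
  phi m_infty = - Lam /\ phi p_infty = Lam /\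
  (forall a : Rbar, - Lam <= phi a <= Lam) /\
  (forall a : Rbar, psi (phi a) = a) /\
  (forall t : R, - Lam <= t <= Lam -> phi (psi t) = t).

Definition rho (phi : Rbar -> R) (psi : R -> Rbar) (s t : R) : R :=
  phi (Rbar_plus (Finite s) (psi t)).

Definition inM (Lam : R) (p : pt) : Prop :=
  -2 * Lam <= fst p + snd p <= 2 * Lam.
Definition inbdM (Lam : R) (p : pt) : Prop :=
  Rabs (fst p + snd p) = 2 * Lam.
Definition preceq (p q : pt) : Prop :=
  fst p >= fst q /\ snd p <= snd q.

Definition Tmap (Lam : R) (p : pt) : pt :=
  (-2 * Lam - snd p, 2 * Lam - fst p).
Definition Tinv (Lam : R) (p : pt) : pt :=
  (2 * Lam - snd p, -2 * Lam - fst p).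
Definition Tpow (Lam : R) (k : Z) (p : pt) : pt :=
  match k with
  | Z0 => p
  | Zpos n => Pos.iter (Tmap Lam) p n
  | Zneg n => Pos.iter (Tinv Lam) p n
  end.

Definition inS (Lam : R) (p : pt) : Prop :=
  - Lam < fst p <= Lam /\ - Lam <= snd p < Lam.
Definition inL (Lam : R) (p : pt) : Prop :=
  fst p + snd p >= -2 * Lam /\ fst p <= - Lam /\ snd p < Lam.
Definition inA (Lam : R) (p : pt) : Prop :=
  fst p + snd p <= 2 * Lam /\ fst p > - Lam /\ snd p >= Lam.

(* Graph of the map calT_eps: calT_eps (T^k u) = T^k (...) for u in S, L, A. *)
Definition calT_rel (Lam : R) (phi : Rbar -> R) (psi : R -> Rbar) (eps : R)
    (v w : pt) : Prop :=
  exists (k : Z) (x y : R), v = Tpow Lam k (x, y) /\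
    ((inS Lam (x, y) /\
        w = Tpow Lam k (rho phi psi (- eps) x, rho phi psi eps y)) \/
     (inL Lam (x, y) /\
        w = Tpow Lam k (-2 * Lam - rho phi psi eps (-2 * Lam - x),
                        rho phi psi eps y)) \/
     (inA Lam (x, y) /\
        w = Tpow Lam k (rho phi psi (- eps) x,
                        2 * Lam - rho phi psi (- eps) (2 * Lam - y)))).

(* calT_eps as a function: the (unique, since M is the disjoint union of the
   T^k(S ⊔ L ⊔ A)) w related to v. *)
Definition calT (Lam : R) (phi : Rbar -> R) (psi : R -> Rbar) (eps : R)
    (v : pt) : pt :=
  epsilon (inhabits ((0, 0) : pt)) (fun w => calT_rel Lam phi psi eps v w).

(* d_int(v,w) = inf {eps > 0 | v ⪯ calT_eps w and w ⪯ calT_eps v}, in [0,+oo]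
   (inf of the empty set is +oo). *)
Definition d_int (Lam : R) (phi : Rbar -> R) (psi : R -> Rbar) (v w : pt)
    : Rbar :=
  Glb_Rbar (fun eps => 0 < eps /\
                       preceq v (calT Lam phi psi eps w) /\
                       preceq w (calT Lam phi psi eps v)).

(* T commutes with every calT_eps and adds 2 Lam to the height
   min (Lam - x, y + Lam), which ranges over [0, 2 Lam) on the fundamental
   domain S ⊔ L ⊔ A; so we may take v in that domain, and any w interleaved with
   it lies in the same translate.  No point of S is interleaved with a boundary
   point, and S satisfies calT_{2 eps} v ⪯ T v trivially.  For v = (x, y) in L
   the nearby boundary points are (-2 Lam - d, d), and the interleaving
   inequalities collapse to y <= rho_s d and d <= rho_s (-2 Lam - x); such d
   exist for some s < eps exactly when rho_{2 eps} moves -2 Lam - x strictly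
   past y, i.e. when calT_{2 eps} v ⋠ T v.  The piece A is the mirror image of
   L under (x, y) ↦ (-y, -x), which replaces phi by a ↦ -phi (-a). *)

From Pilot Require Import Defs.
From Stdlib Require Import Reals Lra Lia ZArith ClassicalEpsilon Classical.
From Coquelicot Require Import Coquelicot.
Open Scope R_scope.

Section Orbits.

Variable Lam : R.

Lemma Tmap_Tinv p : Tmap Lam (Tinv Lam p) = p.
Proof. destruct p as [x y]; unfold Tmap, Tinv; simpl; f_equal; lra. Qed.

Lemma Tinv_Tmap p : Tinv Lam (Tmap Lam p) = p.
Proof. destruct p as [x y]; unfold Tmap, Tinv; simpl; f_equal; lra. Qed.

Lemma Tpow_succ k p : Tpow Lam (Z.succ k) p = Tmap Lam (Tpow Lam k p).
Proof.
  destruct k as [|n|n].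
  - reflexivity.
  - simpl. rewrite Pos.add_1_r, Pos.iter_succ. reflexivity.
  - destruct (Pos.succ_pred_or n) as [->|<-].
    + simpl. rewrite Tmap_Tinv. reflexivity.
    + replace (Z.succ (Z.neg (Pos.succ (Pos.pred n)))) with (Z.neg (Pos.pred n)) by lia.
      simpl. rewrite Pos.iter_succ, Tmap_Tinv. reflexivity.
Qed.

Lemma Tpow_pred k p : Tpow Lam (Z.pred k) p = Tinv Lam (Tpow Lam k p).
Proof.
  destruct k as [|n|n].
  - reflexivity.
  - destruct (Pos.succ_pred_or n) as [->|<-].
    + simpl. rewrite Tinv_Tmap. reflexivity.
    + replace (Z.pred (Z.pos (Pos.succ (Pos.pred n)))) with (Z.pos (Pos.pred n)) by lia.
      simpl. rewrite Pos.iter_succ, Tinv_Tmap. reflexivity.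
  - simpl. rewrite Pos.add_1_r, Pos.iter_succ. reflexivity.
Qed.

Lemma Tpow_add j k p : Tpow Lam (j + k) p = Tpow Lam j (Tpow Lam k p).
Proof.
  induction j as [|j IH|j IH] using Z.peano_ind.
  - reflexivity.
  - rewrite Z.add_succ_l, !Tpow_succ, IH. reflexivity.
  - rewrite Z.add_pred_l, !Tpow_pred, IH. reflexivity.
Qed.

Lemma Tpow_Tmap k p : Tpow Lam k (Tmap Lam p) = Tmap Lam (Tpow Lam k p).
Proof.
  change (Tmap Lam p) with (Tpow Lam 1 p).
  rewrite <- Tpow_add, Z.add_comm, Tpow_add. reflexivity.
Qed.

Lemma Tpow_opp_l k p : Tpow Lam (- k) (Tpow Lam k p) = p.
Proof. rewrite <- Tpow_add, Z.add_opp_diag_l. reflexivity. Qed.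

Lemma Tpow_opp_r k p : Tpow Lam k (Tpow Lam (- k) p) = p.
Proof. rewrite <- Tpow_add, Z.add_opp_diag_r. reflexivity. Qed.

Lemma Tpow_invariant (Rel : pt -> pt -> Prop) :
  (forall p q, Rel (Tmap Lam p) (Tmap Lam q) <-> Rel p q) ->
  forall k p q, Rel (Tpow Lam k p) (Tpow Lam k q) <-> Rel p q.
Proof.
  intros HT k p q.
  induction k as [|k IH|k IH] using Z.peano_ind.
  - reflexivity.
  - rewrite !Tpow_succ, HT. exact IH.
  - rewrite !Tpow_pred, <- IH, <- HT, !Tmap_Tinv. reflexivity.
Qed.

Lemma preceq_Tpow k p q : preceq (Tpow Lam k p) (Tpow Lam k q) <-> preceq p q.
Proof.
  apply (Tpow_invariant preceq). intros [x y] [x' y']; unfold preceq, Tmap; simpl; lra.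
Qed.

Lemma inM_Tpow k p : inM Lam (Tpow Lam k p) <-> inM Lam p.
Proof.
  refine (Tpow_invariant (fun p _ => inM Lam p) _ k p p).
  intros [x y] _; unfold inM, Tmap; simpl; lra.
Qed.

Lemma inbdM_Tpow k p : inbdM Lam (Tpow Lam k p) <-> inbdM Lam p.
Proof.
  refine (Tpow_invariant (fun p _ => inbdM Lam p) _ k p p).
  intros [x y] _; unfold inbdM, Tmap; simpl.
  replace (-2 * Lam - y + (2 * Lam - x)) with (- (x + y)) by ring.
  rewrite Rabs_Ropp. reflexivity.
Qed.

Definition height (p : pt) : R := Rmin (Lam - fst p) (snd p + Lam).

Lemma height_Tpow k p : height (Tpow Lam k p) = height p + 2 * Lam * IZR k.
Proof.
  induction k as [|k IH|k IH] using Z.peano_ind.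
  - simpl. ring.
  - rewrite Tpow_succ, succ_IZR. revert IH. destruct (Tpow Lam k p) as [x y].
    unfold height, Tmap, Rmin; simpl. repeat destruct Rle_dec; lra.
  - rewrite Tpow_pred, <- Z.sub_1_r, minus_IZR. revert IH. destruct (Tpow Lam k p) as [x y].
    unfold height, Tinv, Rmin; simpl. repeat destruct Rle_dec; lra.
Qed.

Lemma height_le p q : preceq p q -> height p <= height q.
Proof.
  destruct p, q; unfold preceq, height, Rmin; simpl. repeat destruct Rle_dec; lra.
Qed.

Definition in_fund (p : pt) : Prop := inS Lam p \/ inL Lam p \/ inA Lam p.

Hypothesis HL : 0 < Lam.

Lemma in_fund_height p : in_fund p -> 0 <= height p < 2 * Lam.
Proof.
  destruct p as [x y]; unfold in_fund, inS, inL, inA, height, Rmin; simpl.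
  repeat destruct Rle_dec; lra.
Qed.

Lemma height_in_fund p : inM Lam p -> 0 <= height p < 2 * Lam -> in_fund p.
Proof.
  destruct p as [x y]; unfold inM, in_fund, inS, inL, inA, height, Rmin; simpl.
  destruct (Rle_dec (Lam - x) (y + Lam)), (Rle_dec x (- Lam)), (Rlt_dec y Lam); lra.
Qed.

Lemma in_fund_inM p : in_fund p -> inM Lam p.
Proof. destruct p; unfold in_fund, inM, inS, inL, inA; simpl; lra. Qed.

Lemma level_le (a b : R) (k j : Z) :
  0 <= a -> b < 2 * Lam -> a + 2 * Lam * IZR k <= b + 2 * Lam * IZR j -> (k <= j)%Z.
Proof.
  intros Ha Hb H.
  assert (IZR k < IZR (j + 1)) as Hkj.
  { rewrite plus_IZR. apply Rmult_lt_reg_l with (2 * Lam); lra. }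
  apply lt_IZR in Hkj. lia.
Qed.

Lemma fund_decomposition v : inM Lam v -> exists k p, in_fund p /\ v = Tpow Lam k p.
Proof.
  intros Hv.
  set (r := height v / (2 * Lam)).
  destruct (archimed r) as [Hup1 Hup2].
  exists (up r - 1)%Z, (Tpow Lam (- (up r - 1)) v). split.
  - apply height_in_fund; [apply inM_Tpow; exact Hv|].
    rewrite height_Tpow, opp_IZR, minus_IZR.
    replace (height v) with (r * (2 * Lam)) by (unfold r; field; lra).
    simpl. split; nra.
  - rewrite Tpow_opp_r. reflexivity.
Qed.

Lemma fund_decomposition_unique k j p q :
  in_fund p -> in_fund q -> Tpow Lam k p = Tpow Lam j q -> k = j /\ p = q.
Proof.
  intros Hp Hq E.
  assert (Hh := f_equal height E). rewrite !height_Tpow in Hh.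
  apply in_fund_height in Hp, Hq.
  assert (k = j) as <-.
  { apply Z.le_antisymm;
      [apply (level_le (height p) (height q)) | apply (level_le (height q) (height p))]; lra. }
  split; [reflexivity|].
  rewrite <- (Tpow_opp_l k p), E, Tpow_opp_l. reflexivity.
Qed.

End Orbits.
Section Flow.

Variables (Lam : R) (phi : Rbar -> R) (psi : R -> Rbar).
Hypothesis Hphi : incr_homeo Lam phi psi.

Local Notation rho := (rho phi psi).

Lemma phi_lt a b : Rbar_lt a b -> phi a < phi b.
Proof. apply Hphi. Qed.

Lemma phi_le a b : Rbar_le a b -> phi a <= phi b.
Proof.
  intros Hab. destruct (Rbar_le_lt_or_eq_dec a b Hab) as [H|<-]; [|lra].
  left. apply phi_lt, H.
Qed.

Lemma phi_psi t : - Lam <= t <= Lam -> phi (psi t) = t.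
Proof. apply Hphi. Qed.

Lemma psi_phi a : psi (phi a) = a.
Proof. apply Hphi. Qed.

Lemma phi_range a : - Lam <= phi a <= Lam.
Proof. apply Hphi. Qed.

Lemma phi_m_infty : phi m_infty = - Lam.
Proof. apply Hphi. Qed.

Lemma phi_p_infty : phi p_infty = Lam.
Proof. apply Hphi. Qed.

Lemma phi_finite_bounds (a : R) : - Lam < phi a < Lam.
Proof. rewrite <- phi_m_infty, <- phi_p_infty. split; apply phi_lt; exact I. Qed.

Lemma phi_finite_lt_iff (a b : R) : phi a < phi b <-> a < b.
Proof.
  split; [|intros Hab; apply (phi_lt a b), Hab].
  intros H. destruct (Rlt_or_le a b) as [|Hba]; [assumption|].
  apply (phi_le b a) in Hba. lra.
Qed.

Lemma phi_finite_le_iff (a b : R) : phi a <= phi b <-> a <= b.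
Proof.
  split; [|intros Hab; apply (phi_le a b), Hab].
  intros H. destruct (Rlt_or_le b a) as [Hba|]; [|assumption].
  apply (phi_lt b a) in Hba. lra.
Qed.

Lemma psi_le t1 t2 : - Lam <= t1 -> t2 <= Lam -> t1 <= t2 -> Rbar_le (psi t1) (psi t2).
Proof.
  intros H1 H2 H12. apply Rbar_not_lt_le. intros Hlt.
  apply phi_lt in Hlt. rewrite !phi_psi in Hlt; lra.
Qed.

Lemma range_cases t : - Lam <= t <= Lam -> t = - Lam \/ t = Lam \/ exists a : R, t = phi a.
Proof.
  intros Ht. rewrite <- (phi_psi t Ht).
  destruct (psi t) as [a| |]; [right; right; exists a | right; left | left]; auto.
  - apply phi_p_infty.
  - apply phi_m_infty.
Qed.

Lemma rho_phi s a : rho s (phi a) = phi (Rbar_plus s a).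
Proof. unfold Defs.rho. rewrite psi_phi. reflexivity. Qed.

Lemma rho_Lam s : rho s Lam = Lam.
Proof. rewrite <- phi_p_infty, rho_phi. reflexivity. Qed.

Lemma rho_m_Lam s : rho s (- Lam) = - Lam.
Proof. rewrite <- phi_m_infty, rho_phi. reflexivity. Qed.

Lemma rho_comp s r t : rho s (rho r t) = rho (s + r) t.
Proof.
  unfold Defs.rho at 2. rewrite rho_phi. unfold Defs.rho.
  destruct (psi t); simpl; [do 2 f_equal; ring | reflexivity | reflexivity].
Qed.

Lemma rho_range s t : - Lam <= rho s t <= Lam.
Proof. apply phi_range. Qed.

Lemma rho_le s t1 t2 : - Lam <= t1 -> t2 <= Lam -> t1 <= t2 -> rho s t1 <= rho s t2.
Proof.
  intros H1 H2 H12. apply phi_le, Rbar_plus_le_compat; [apply Rbar_le_refl|].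
  apply psi_le; assumption.
Qed.

Lemma rho_lt_Lam s t : - Lam <= t < Lam -> rho s t < Lam.
Proof.
  intros Ht. destruct (range_cases t) as [->|[->|[a ->]]]; [lra | | lra |].
  - rewrite rho_m_Lam. pose proof (phi_finite_bounds 0). lra.
  - rewrite rho_phi. apply phi_finite_bounds.
Qed.

Lemma rho_gt_m_Lam s t : - Lam < t <= Lam -> - Lam < rho s t.
Proof.
  intros Ht. destruct (range_cases t) as [->|[->|[a ->]]]; [lra | lra | |].
  - rewrite rho_Lam. pose proof (phi_finite_bounds 0). lra.
  - rewrite rho_phi. apply phi_finite_bounds.
Qed.

(* For v = (-2 Lam - t, y) in L, the four inequalities say that v and the
   boundary point (-2 Lam - d, d) are s-interleaved. *)
Lemma flow_interleaving_iff eps t y :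
  0 < eps -> - Lam <= t < y -> y < Lam ->
  (exists s d, 0 < s < eps /\ - Lam <= d < Lam /\
     t <= rho s d /\ y <= rho s d /\ d <= rho s t /\ d <= rho s y)
  <-> y < rho (2 * eps) t.
Proof.
  intros He Hty Hy.
  destruct (range_cases t) as [Et|[Et|[a Et]]]; [lra | subst t | lra | subst t].
  { rewrite rho_m_Lam. split; [|lra].
    intros (s & d & _ & Hd & _ & Hyd & Hdt & _).
    rewrite rho_m_Lam in Hdt. replace d with (- Lam) in Hyd by lra.
    rewrite rho_m_Lam in Hyd. lra. }
  pose proof (phi_finite_bounds a).
  destruct (range_cases y) as [Ey|[Ey|[b Ey]]]; [lra | lra | lra | subst y].
  assert (Hab : a < b) by (apply phi_finite_lt_iff; lra).
  rewrite rho_phi. simpl. rewrite phi_finite_lt_iff.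
  split.
  - intros (s & d & Hs & Hd & _ & Hyd & Hdt & _).
    assert (Hss : phi b <= rho s (rho s (phi a))).
    { pose proof (rho_range s (phi a)).
      eapply Rle_trans; [exact Hyd | apply rho_le; lra]. }
    rewrite rho_comp, rho_phi in Hss. simpl in Hss.
    rewrite phi_finite_le_iff in Hss. lra.
  - intros Hb.
    (* 2 s + a is the midpoint of b and 2 eps + a; the witness is d = rho_s t. *)
    set (s := (2 * eps + b - a) / 4).
    assert (0 < s < eps /\ b <= s + (s + a)) by (unfold s; lra).
    exists s, (phi (s + a)).
    rewrite !rho_phi. simpl. rewrite !phi_finite_le_iff.
    pose proof (phi_finite_bounds (s + a)).
    repeat split; lra.
Qed.

End Flow.

(* Conjugating by t ↦ -t exchanges the pieces L and A (see rho_refl). *)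
Definition phi_refl (phi : Rbar -> R) (a : Rbar) : R := - phi (Rbar_opp a).
Definition psi_refl (psi : R -> Rbar) (t : R) : Rbar := Rbar_opp (psi (- t)).

Lemma incr_homeo_refl Lam phi psi :
  incr_homeo Lam phi psi -> incr_homeo Lam (phi_refl phi) (psi_refl psi).
Proof.
  intros (Hlt & Hm & Hp & Hrng & Hpsiphi & Hphipsi).
  unfold phi_refl, psi_refl. split; [|split; [|split; [|split; [|split]]]]; simpl.
  - intros a b Hab. apply Ropp_lt_contravar, Hlt, Rbar_opp_lt. exact Hab.
  - rewrite Hp. reflexivity.
  - rewrite Hm. ring.
  - intros c. pose proof (Hrng (Rbar_opp c)). lra.
  - intros c. rewrite Ropp_involutive, Hpsiphi. apply Rbar_opp_involutive.
  - intros t Ht. rewrite Rbar_opp_involutive, Hphipsi by lra. ring.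
Qed.

Lemma rho_refl phi psi s t :
  rho (phi_refl phi) (psi_refl psi) s t = - rho phi psi (- s) (- t).
Proof.
  unfold rho, phi_refl, psi_refl.
  destruct (psi (- t)); simpl; [do 3 f_equal; ring | reflexivity | reflexivity].
Qed.

Lemma flow_interleaving_iff_rev Lam phi psi eps u x :
  incr_homeo Lam phi psi -> 0 < eps -> - Lam < x -> x < u <= Lam ->
  (exists s c, 0 < s < eps /\ - Lam < c <= Lam /\
     rho phi psi (- s) c <= u /\ rho phi psi (- s) c <= x /\
     rho phi psi (- s) u <= c /\ rho phi psi (- s) x <= c)
  <-> rho phi psi (- (2 * eps)) u < x.
Proof.
  intros Hphi He Hx Hxu.
  pose proof (flow_interleaving_iff Lam _ _ (incr_homeo_refl Lam phi psi Hphi)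
                eps (- u) (- x) He ltac:(lra) ltac:(lra)) as Hflow.
  rewrite rho_refl, Ropp_involutive in Hflow.
  split.
  - intros (s & c & Hs & Hc & H1 & H2 & H3 & H4).
    enough (- x < - rho phi psi (- (2 * eps)) u) by lra.
    apply Hflow. exists s, (- c).
    rewrite !rho_refl, !Ropp_involutive. repeat split; lra.
  - intros Hlt. destruct (proj2 Hflow ltac:(lra)) as (s & d & Hs & Hd & H).
    rewrite !rho_refl, !Ropp_involutive in H.
    exists s, (- d). repeat split; lra.
Qed.

Lemma Glb_Rbar_lt_iff (E : R -> Prop) (e : R) :
  Rbar_lt (Glb_Rbar E) e <-> exists x, E x /\ x < e.
Proof.
  destruct (Glb_Rbar_correct E) as [Hlb Hglb]. split.
  - intros Hlt. apply NNPP. intros Hn. apply (Rbar_lt_not_le _ _ Hlt), Hglb.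
    intros x Hx. apply Rnot_lt_le. intros Hxe. apply Hn. exists x. auto.
  - intros (x & Hx & Hxe). eapply Rbar_le_lt_trans; [apply Hlb, Hx | exact Hxe].
Qed.

Section Model.

Variables (Lam : R) (phi : Rbar -> R) (psi : R -> Rbar).
Hypotheses (HL : 0 < Lam) (Hphi : incr_homeo Lam phi psi).

Local Notation rho := (rho phi psi).

Definition calT_fund (s : R) (p : pt) : pt :=
  let (x, y) := p in
  if Rle_dec x (- Lam) then (-2 * Lam - rho s (-2 * Lam - x), rho s y)
  else if Rlt_dec y Lam then (rho (- s) x, rho s y)
  else (rho (- s) x, 2 * Lam - rho (- s) (2 * Lam - y)).

Lemma calT_fund_S s x y : inS Lam (x, y) ->
  calT_fund s (x, y) = (rho (- s) x, rho s y).
Proof.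
  unfold inS, calT_fund; simpl; intros.
  destruct Rle_dec; [lra|]. destruct Rlt_dec; [reflexivity|lra].
Qed.

Lemma calT_fund_L s x y : inL Lam (x, y) ->
  calT_fund s (x, y) = (-2 * Lam - rho s (-2 * Lam - x), rho s y).
Proof. unfold inL, calT_fund; simpl; intros. destruct Rle_dec; [reflexivity|lra]. Qed.

Lemma calT_fund_A s x y : inA Lam (x, y) ->
  calT_fund s (x, y) = (rho (- s) x, 2 * Lam - rho (- s) (2 * Lam - y)).
Proof.
  unfold inA, calT_fund; simpl; intros.
  destruct Rle_dec; [lra|]. destruct Rlt_dec; [lra|reflexivity].
Qed.

Lemma calT_rel_calT_fund s k p : in_fund Lam p ->
  calT_rel Lam phi psi s (Tpow Lam k p) (Tpow Lam k (calT_fund s p)).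
Proof.
  destruct p as [x y]. intros Hp. exists k, x, y. split; [reflexivity|].
  destruct Hp as [h|[h|h]]; [left | right; left | right; right]; split; try exact h.
  - rewrite calT_fund_S by exact h. reflexivity.
  - rewrite calT_fund_L by exact h. reflexivity.
  - rewrite calT_fund_A by exact h. reflexivity.
Qed.

Lemma calT_rel_functional s v w1 w2 :
  calT_rel Lam phi psi s v w1 -> calT_rel Lam phi psi s v w2 -> w1 = w2.
Proof.
  intros (k1 & x1 & y1 & E1 & H1) (k2 & x2 & y2 & E2 & H2).
  assert (D1 : in_fund Lam (x1, y1)) by (unfold in_fund; tauto).
  assert (D2 : in_fund Lam (x2, y2)) by (unfold in_fund; tauto).
  rewrite E1 in E2.
  destruct (fund_decomposition_unique Lam HL _ _ _ _ D1 D2 E2) as [<- Ep].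
  injection Ep as <- <-.
  destruct H1 as [[a1 ->]|[[a1 ->]|[a1 ->]]], H2 as [[a2 ->]|[[a2 ->]|[a2 ->]]];
    try reflexivity; unfold inS, inL, inA in *; simpl in *; lra.
Qed.

Lemma calT_Tpow s k p : in_fund Lam p ->
  calT Lam phi psi s (Tpow Lam k p) = Tpow Lam k (calT_fund s p).
Proof.
  intros Hp. pose proof (calT_rel_calT_fund s k p Hp) as Hrel.
  apply (calT_rel_functional s (Tpow Lam k p)); [|exact Hrel].
  unfold calT. apply epsilon_spec. exists (Tpow Lam k (calT_fund s p)). exact Hrel.
Qed.

Lemma calT_fund_in_fund s p : in_fund Lam p -> in_fund Lam (calT_fund s p).
Proof.
  destruct p as [x y]. unfold in_fund. intros [h|[h|h]].
  - rewrite calT_fund_S by exact h. left. unfold inS in *; simpl in *.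
    pose proof (rho_gt_m_Lam Lam phi psi Hphi (- s) x ltac:(lra)).
    pose proof (rho_lt_Lam Lam phi psi Hphi s y ltac:(lra)).
    pose proof (rho_range Lam phi psi Hphi (- s) x).
    pose proof (rho_range Lam phi psi Hphi s y). lra.
  - rewrite calT_fund_L by exact h. right; left. unfold inL in *; simpl in *.
    pose proof (rho_lt_Lam Lam phi psi Hphi s y ltac:(lra)).
    pose proof (rho_range Lam phi psi Hphi s (-2 * Lam - x)).
    pose proof (rho_le Lam phi psi Hphi s (-2 * Lam - x) y ltac:(lra) ltac:(lra) ltac:(lra)).
    lra.
  - rewrite calT_fund_A by exact h. right; right. unfold inA in *; simpl in *.
    pose proof (rho_gt_m_Lam Lam phi psi Hphi (- s) x ltac:(lra)).
    pose proof (rho_range Lam phi psi Hphi (- s) (2 * Lam - y)).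
    pose proof (rho_le Lam phi psi Hphi (- s) x (2 * Lam - y) ltac:(lra) ltac:(lra) ltac:(lra)).
    lra.
Qed.

Definition interleaved (s : R) (p q : pt) : Prop :=
  preceq p (calT_fund s q) /\ preceq q (calT_fund s p).

Lemma fund_boundary_cases q : in_fund Lam q -> inbdM Lam q ->
  (inL Lam q /\ fst q + snd q = -2 * Lam) \/ (inA Lam q /\ fst q + snd q = 2 * Lam).
Proof.
  destruct q as [c d]. unfold in_fund, inbdM, inS, inL, inA; simpl.
  destruct (Rcase_abs (c + d)); [rewrite Rabs_left | rewrite Rabs_right]; lra.
Qed.

Lemma interleaved_snd_lt s p q : inS Lam p \/ inL Lam p -> interleaved s p q -> snd q < Lam.
Proof.
  destruct p as [x y]. intros Hp [_ Hq].
  assert (Hy : - Lam <= y < Lam) by (unfold inS, inL in Hp; simpl in Hp; lra).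
  pose proof (rho_lt_Lam Lam phi psi Hphi s y Hy).
  destruct Hp as [h|h];
    [rewrite calT_fund_S in Hq by exact h | rewrite calT_fund_L in Hq by exact h];
    unfold preceq in Hq; simpl in Hq; lra.
Qed.

Lemma interleaved_fst_gt s p q : inS Lam p \/ inA Lam p -> interleaved s p q -> - Lam < fst q.
Proof.
  destruct p as [x y]. intros Hp [_ Hq].
  assert (Hx : - Lam < x <= Lam) by (unfold inS, inA in Hp; simpl in Hp; lra).
  pose proof (rho_gt_m_Lam Lam phi psi Hphi (- s) x Hx).
  destruct Hp as [h|h];
    [rewrite calT_fund_S in Hq by exact h | rewrite calT_fund_A in Hq by exact h];
    unfold preceq in Hq; simpl in Hq; lra.
Qed.

Lemma S_calT_fund_below_T s p : inS Lam p -> preceq (calT_fund s p) (Tmap Lam p).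
Proof.
  destruct p as [x y]. intros h. rewrite calT_fund_S by exact h.
  pose proof (rho_range Lam phi psi Hphi (- s) x).
  pose proof (rho_range Lam phi psi Hphi s y).
  unfold inS, preceq, Tmap in *; simpl in *. lra.
Qed.

Lemma L_interleaving_iff eps x y :
  0 < eps -> inL Lam (x, y) -> -2 * Lam < x + y ->
  (exists s q, 0 < s < eps /\ inL Lam q /\ fst q + snd q = -2 * Lam /\
     interleaved s (x, y) q)
  <-> ~ preceq (calT_fund (2 * eps) (x, y)) (Tmap Lam (x, y)).
Proof.
  intros He Hp Hxy.
  pose proof Hp as Hp'. unfold inL in Hp'; simpl in Hp'.
  assert (Hrhs : ~ preceq (calT_fund (2 * eps) (x, y)) (Tmap Lam (x, y))
                 <-> y < rho (2 * eps) (-2 * Lam - x)).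
  { rewrite calT_fund_L by exact Hp. unfold preceq, Tmap; simpl.
    pose proof (rho_range Lam phi psi Hphi (2 * eps) y) as Hr.
    split; [intros Hn; apply Rnot_le_lt; intros Hle; apply Hn; split | intros Hlt [H1 _]]; lra. }
  rewrite Hrhs, <- (flow_interleaving_iff Lam phi psi Hphi eps (-2 * Lam - x) y He)
    by lra.
  split.
  - intros (s & [c d] & Hs & Hq & Hcd & H1 & H2). simpl in Hcd.
    rewrite calT_fund_L in H1 by exact Hq. rewrite calT_fund_L in H2 by exact Hp.
    replace (-2 * Lam - c) with d in H1 by lra.
    exists s, d. unfold inL, preceq in *; simpl in *. repeat split; lra.
  - intros (s & d & Hs & Hd & H).
    assert (Hq : inL Lam (-2 * Lam - d, d)) by (unfold inL; simpl; lra).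
    exists s, (-2 * Lam - d, d).
    split; [lra|]. split; [exact Hq|]. split; [simpl; ring|].
    unfold interleaved. rewrite (calT_fund_L s _ _ Hq), (calT_fund_L s _ _ Hp).
    replace (-2 * Lam - (-2 * Lam - d)) with d by ring.
    unfold preceq; simpl. split; split; lra.
Qed.

Lemma A_interleaving_iff eps x y :
  0 < eps -> inA Lam (x, y) -> x + y < 2 * Lam ->
  (exists s q, 0 < s < eps /\ inA Lam q /\ fst q + snd q = 2 * Lam /\
     interleaved s (x, y) q)
  <-> ~ preceq (calT_fund (2 * eps) (x, y)) (Tmap Lam (x, y)).
Proof.
  intros He Hp Hxy.
  pose proof Hp as Hp'. unfold inA in Hp'; simpl in Hp'.
  assert (Hrhs : ~ preceq (calT_fund (2 * eps) (x, y)) (Tmap Lam (x, y))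
                 <-> rho (- (2 * eps)) (2 * Lam - y) < x).
  { rewrite calT_fund_A by exact Hp. unfold preceq, Tmap; simpl.
    pose proof (rho_range Lam phi psi Hphi (- (2 * eps)) x) as Hr.
    split; [intros Hn; apply Rnot_le_lt; intros Hle; apply Hn; split | intros Hlt [_ H2]]; lra. }
  rewrite Hrhs, <- (flow_interleaving_iff_rev Lam phi psi eps (2 * Lam - y) x Hphi He)
    by lra.
  split.
  - intros (s & [c d] & Hs & Hq & Hcd & H1 & H2). simpl in Hcd.
    rewrite calT_fund_A in H1 by exact Hq. rewrite calT_fund_A in H2 by exact Hp.
    replace (2 * Lam - d) with c in H1 by lra.
    exists s, c. unfold inA, preceq in *; simpl in *. repeat split; lra.
  - intros (s & c & Hs & Hc & H).
    assert (Hq : inA Lam (c, 2 * Lam - c)) by (unfold inA; simpl; lra).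
    exists s, (c, 2 * Lam - c).
    split; [lra|]. split; [exact Hq|]. split; [simpl; ring|].
    unfold interleaved. rewrite (calT_fund_A s _ _ Hq), (calT_fund_A s _ _ Hp).
    replace (2 * Lam - (2 * Lam - c)) with c by ring.
    unfold preceq; simpl. split; split; lra.
Qed.

Lemma fund_interleaving_iff eps p :
  0 < eps -> in_fund Lam p -> ~ inbdM Lam p ->
  (exists s q, 0 < s < eps /\ in_fund Lam q /\ inbdM Lam q /\ interleaved s p q)
  <-> ~ preceq (calT_fund (2 * eps) p) (Tmap Lam p).
Proof.
  intros He Hp Hpb. destruct p as [x y].
  assert (Hsum : -2 * Lam < x + y < 2 * Lam).
  { pose proof (in_fund_inM Lam (x, y) Hp) as HM. unfold inM, inbdM in *; simpl in *.
    split; apply Rnot_le_lt; intros Hle; apply Hpb;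
      [rewrite Rabs_left | rewrite Rabs_right]; lra. }
  destruct Hp as [h|[h|h]].
  - split; [|intros Hn; exfalso; exact (Hn (S_calT_fund_below_T _ _ h))].
    intros (s & q & _ & Hq & Hqb & Hi).
    pose proof (interleaved_snd_lt s _ q (or_introl h) Hi).
    pose proof (interleaved_fst_gt s _ q (or_introl h) Hi).
    destruct (fund_boundary_cases q Hq Hqb) as [[Hc _]|[Hc _]];
      destruct q; unfold inL, inA in Hc; simpl in *; lra.
  - rewrite <- L_interleaving_iff by (exact He || exact h || lra).
    split; intros (s & q & Hs & Hq & Hqb & Hi).
    + assert (HqL : inL Lam q /\ fst q + snd q = -2 * Lam).
      { pose proof (interleaved_snd_lt s _ q (or_intror h) Hi).
        destruct (fund_boundary_cases q Hq Hqb) as [Hc|[Hc _]]; [exact Hc|].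
        destruct q; unfold inA in Hc; simpl in *; lra. }
      exists s, q. tauto.
    + exists s, q. split; [exact Hs|]. split; [unfold in_fund; tauto|].
      split; [|exact Hi]. unfold inbdM. rewrite Hqb, Rabs_left; lra.
  - rewrite <- A_interleaving_iff by (exact He || exact h || lra).
    split; intros (s & q & Hs & Hq & Hqb & Hi).
    + assert (HqA : inA Lam q /\ fst q + snd q = 2 * Lam).
      { pose proof (interleaved_fst_gt s _ q (or_intror h) Hi).
        destruct (fund_boundary_cases q Hq Hqb) as [[Hc _]|Hc]; [|exact Hc].
        destruct q; unfold inL in Hc; simpl in *; lra. }
      exists s, q. tauto.
    + exists s, q. split; [exact Hs|]. split; [unfold in_fund; tauto|].
      split; [|exact Hi]. unfold inbdM. rewrite Hqb, Rabs_right; lra.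
Qed.

Lemma interleaved_same_level s k j p q : in_fund Lam p -> in_fund Lam q ->
  preceq (Tpow Lam k p) (Tpow Lam j (calT_fund s q)) ->
  preceq (Tpow Lam j q) (Tpow Lam k (calT_fund s p)) -> j = k.
Proof.
  intros Hp Hq H1 H2.
  apply (height_le Lam) in H1, H2. rewrite !height_Tpow in H1, H2.
  pose proof (in_fund_height Lam p Hp). pose proof (in_fund_height Lam q Hq).
  pose proof (in_fund_height Lam _ (calT_fund_in_fund s p Hp)).
  pose proof (in_fund_height Lam _ (calT_fund_in_fund s q Hq)).
  apply Z.le_antisymm;
    [apply (level_le Lam HL (height Lam q) (height Lam (calT_fund s p)))
    | apply (level_le Lam HL (height Lam p) (height Lam (calT_fund s q)))]; lra.
Qed.

Lemma close_boundary_iff (eps : R) (k : Z) (p : pt) : in_fund Lam p ->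
  (exists w, inM Lam w /\ inbdM Lam w /\ Rbar_lt (d_int Lam phi psi (Tpow Lam k p) w) eps)
  <-> (exists s q, 0 < s < eps /\ in_fund Lam q /\ inbdM Lam q /\ interleaved s p q).
Proof.
  intros Hp. unfold d_int. split.
  - intros (w & Hw & Hwb & Hd).
    apply Glb_Rbar_lt_iff in Hd. destruct Hd as (s & (Hs & H1 & H2) & Hse).
    destruct (fund_decomposition Lam HL w Hw) as (j & q & Hq & ->).
    rewrite calT_Tpow in H1, H2 by assumption.
    assert (j = k) as -> by exact (interleaved_same_level s k j p q Hp Hq H1 H2).
    rewrite preceq_Tpow in H1, H2. apply inbdM_Tpow in Hwb.
    exists s, q. split; [lra|]. split; [exact Hq|]. split; [exact Hwb|]. split; assumption.
  - intros (s & q & Hs & Hq & Hqb & H1 & H2).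
    exists (Tpow Lam k q). split; [apply inM_Tpow, in_fund_inM, Hq|].
    split; [apply inbdM_Tpow, Hqb|].
    apply Glb_Rbar_lt_iff. exists s. split; [|lra].
    rewrite !calT_Tpow, !preceq_Tpow by assumption. split; [lra|]. split; assumption.
Qed.

End Model.

Theorem proposition7p5 (Lam : R) (phi : Rbar -> R) (psi : R -> Rbar)
  (v : pt) (eps : R) :
  0 < Lam ->
  incr_homeo Lam phi psi ->
  inM Lam v -> ~ inbdM Lam v ->
  0 < eps ->
  ((exists w : pt, inM Lam w /\ inbdM Lam w /\
       Rbar_lt (d_int Lam phi psi v w) (Finite eps)) <->
   ~ preceq (calT Lam phi psi (2 * eps) v) (Tmap Lam v)).
Proof.
  intros HL Hphi Hv Hvb He.
  destruct (fund_decomposition Lam HL v Hv) as (k & p & Hp & ->).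
  assert (Hpb : ~ inbdM Lam p) by (rewrite <- (inbdM_Tpow Lam k); exact Hvb).
  rewrite (close_boundary_iff Lam phi psi HL Hphi eps k p Hp).
  rewrite (fund_interleaving_iff Lam phi psi HL Hphi eps p He Hp Hpb).
  rewrite (calT_Tpow Lam phi psi HL (2 * eps) k p Hp), <- Tpow_Tmap, preceq_Tpow.
  reflexivity.
Qed.
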